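(* For all integers $m\ge 2$ and $n\ge 1$, $p(m,n)<n!/2$.
   Context: For integers $m\ge 2$, $n\ge 1$, a valid $(m,n)$-sequence is a sequence $(a_1,\dots,a_{mn})$ with entries in $\{1,\dots,n\}$ in which each $k\in\{1,\dots,n\}$ occurs exactly $m$ times, and such that any two consecutive occurrences of $k$ are separated by exactly $k$ other terms; equivalently, there is an index $\theta_k$ such that $k$ occurs exactly at the positions $\theta_k,\ \theta_k+(k+1),\ \dots,\theta_k+(m-1)(k+1)$ (all in $\{1,\dots,mn\}$). The reversal of a valid sequence is again valid; $p(m,n)$ denotes the number of valid $(m,n)$-sequences counted up to reversal (i.e. the number of equivalence classes of valid sequences under identifying a sequence with its reversal). *)

From mathcomp Require Import all_boot.
Set Implicit Arguments. Unset Strict Implicit. Unset Printing Implicit Defensive.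

(* A candidate (m,n)-sequence: a tuple of length m*n with entries in 'I_n.+1
   (i.e. in {0,...,n}); validity additionally requires entries to be nonzero.
   Positions are 0-indexed: position i here is position i+1 in the paper. *)
Definition occurs_as_prescribed (m n : nat) (t : (m * n).-tuple 'I_n.+1)
    (k : 'I_n.+1) : bool :=
  [exists theta : 'I_(m * n),
     (theta + (m - 1) * (k + 1) < m * n) &&
     [forall i : 'I_(m * n),
        (tnth t i == k) == [exists j : 'I_m, val i == theta + j * (k + 1)]]].

Definition valid_seq (m n : nat) (t : (m * n).-tuple 'I_n.+1) : bool :=
  [forall i : 'I_(m * n), tnth t i != ord0] &&
  [forall k : 'I_n.+1, (k != ord0) ==> occurs_as_prescribed t k].

Definition rev_class (m n : nat) (s : (m * n).-tuple 'I_n.+1)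
    : {set (m * n).-tuple 'I_n.+1} :=
  [set t : (m * n).-tuple 'I_n.+1 | (t == s) || (val t == rev (val s))].

Definition p (m n : nat) : nat :=
  #|[set rev_class s | s in [pred s : (m * n).-tuple 'I_n.+1 | valid_seq s]]|.

From mathcomp Require Import all_boot zify.
Set Implicit Arguments. Unset Strict Implicit. Unset Printing Implicit Defensive.

(* Reversal is a fixed-point-free involution on valid sequences (in a palindrome the
   progressions of 1 and 2 would collide), so 2 p(m,n) is at most the number of valid
   sequences.  A valid sequence is determined by the order in which its values first
   occur, since every later entry repeats a value whose positions are fixed by its first
   occurrence.  That order is a permutation of 1..n which never starts with 2, 1: the
   entry at (0-indexed) position 3 would have to be both 2 and 1.  Hence there are fewer
   than n! valid sequences. *)

Section FirstOccurrences.
Variable T : eqType.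

(* [undup] keeps the last occurrence of each item, hence the double reversal. *)
Definition first_occurrences (s : seq T) : seq T := rev (undup (rev s)).

Lemma first_occurrences_cat (s1 s2 : seq T) :
  first_occurrences (s1 ++ s2) =
  first_occurrences s1 ++ rev [seq x <- undup (rev s2) | x \notin s1].
Proof.
by rewrite /first_occurrences rev_cat undup_cat rev_cat; under eq_filter do rewrite mem_rev.
Qed.

Lemma first_occurrences_rcons (s : seq T) (x : T) :
  x \notin s -> first_occurrences (rcons s x) = rcons (first_occurrences s) x.
Proof. by move=> xNs; rewrite -cats1 first_occurrences_cat /= xNs cats1. Qed.

Lemma first_occurrences_uniq (s : seq T) : uniq (first_occurrences s).
Proof. by rewrite rev_uniq undup_uniq. Qed.

Lemma mem_first_occurrences (s : seq T) : first_occurrences s =i s.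
Proof. by move=> x; rewrite mem_rev mem_undup mem_rev. Qed.

Lemma first_occurrences_take (s : seq T) i :
  first_occurrences (take i s) =
  take (size (first_occurrences (take i s))) (first_occurrences s).
Proof.
rewrite -[X in take _ (first_occurrences X)](cat_take_drop i s) first_occurrences_cat.
by rewrite take_size_cat.
Qed.

Lemma eq_from_first_occurrences (x0 : T) (s t : seq T) :
  size s = size t -> first_occurrences s = first_occurrences t ->
  (forall i, i < size s -> take i s = take i t ->
     nth x0 s i \in take i s -> nth x0 t i = nth x0 s i) ->
  (forall i, i < size s -> take i s = take i t ->
     nth x0 t i \in take i t -> nth x0 s i = nth x0 t i) ->
  s = t.
Proof.
move=> size_st Fst repeat_s repeat_t.
suff take_st i : i <= size s -> take i s = take i t.
  by rewrite -(take_size s) take_st // size_st take_size.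
elim: i => [|i IHi] lt_i; first by rewrite !take0.
have {IHi} Est := IHi (ltnW lt_i).
rewrite !(take_nth x0) -?size_st // Est; congr rcons.
have [s_rep|s_new] := boolP (nth x0 s i \in take i s); first by rewrite repeat_s.
have [t_rep|t_new] := boolP (nth x0 t i \in take i t); first by rewrite repeat_t.
have F_take u : i < size u -> nth x0 u i \notin take i u ->
    take (size (first_occurrences (take i u))).+1 (first_occurrences u) =
    rcons (first_occurrences (take i u)) (nth x0 u i).
  move=> lt_iu u_new; have F_rcons := first_occurrences_rcons u_new.
  rewrite -F_rcons -(take_nth x0 lt_iu) [RHS]first_occurrences_take.
  by rewrite (take_nth x0 lt_iu) F_rcons size_rcons.
have := F_take s lt_i s_new; rewrite Fst Est F_take -?size_st // => E.
by rewrite (rcons_injr _ E).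
Qed.

End FirstOccurrences.

Lemma double_card_imset_le (T T' : finType) (A : {pred T}) (g : T -> T') :
  {in A, forall x, 1 < #|[pred y in A | g y == g x]|} -> 2 * #|g @: A| <= #|A|.
Proof.
move=> fibre_gt1; rewrite -[#|A|]sum1_card (partition_big_imset g) /=.
rewrite mulnC -sum_nat_const.
apply: leq_sum => _ /imsetP [x Ax ->]; rewrite sum1_card.
by apply: leq_trans (fibre_gt1 x Ax) _; apply: subset_leq_card; apply/subsetP => y; rewrite !inE.
Qed.

Lemma occurs_as_prescribed_index m n (t : (m * n).-tuple 'I_n.+1) (k : 'I_n.+1) :
  occurs_as_prescribed t k ->
  index k t + (m - 1) * (k + 1) < m * n /\
  forall i, i < m * n ->
    (nth ord0 t i == k) = [exists j : 'I_m, i == index k t + j * (k + 1)].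
Proof.
move=> /existsP [th /andP [th_last /forallP thP]].
have {}thP i : i < m * n ->
    (nth ord0 t i == k) = [exists j : 'I_m, i == th + j * (k + 1)].
  by move=> lt_i; have /eqP := thP (Ordinal lt_i); rewrite (tnth_nth ord0).
have /andP [m_gt0 _] : (0 < m) && (0 < n) by rewrite -muln_gt0 (leq_ltn_trans _ (ltn_ord th)).
have t_th : nth ord0 t th = k.
  by apply/eqP; rewrite thP //; apply/existsP; exists (Ordinal m_gt0); rewrite mul0n addn0.
have k_t : k \in val t by rewrite -t_th mem_nth ?size_tuple.
suff -> : index k t = th by split.
apply/eqP; rewrite eqn_leq -{1}t_th index_nth ?size_tuple //=.
have lt_idx : index k t < m * n by rewrite -[X in _ < X](size_tuple t) index_mem.
have : nth ord0 t (index k t) == k by rewrite nth_index.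
by rewrite thP // => /existsP [j /eqP ->]; apply: leq_addr.
Qed.

Section ValidSequence.
Variables m n : nat.
Variable s : (m * n).-tuple 'I_n.+1.
Hypothesis s_valid : valid_seq s.

Lemma valid_nth_neq0 i : i < m * n -> nth ord0 s i != ord0.
Proof.
move: s_valid => /andP [/forallP s_neq0 _] lt_i.
by have := s_neq0 (Ordinal lt_i); rewrite (tnth_nth ord0).
Qed.

Let valid_occurs k : k != ord0 -> occurs_as_prescribed s k.
Proof. by move: s_valid => /andP [_ /forallP s_occ] k_neq0; apply: implyP k_neq0. Qed.

Lemma valid_index_last k : k != ord0 -> index k s + (m - 1) * (k + 1) < m * n.
Proof. by move/valid_occurs/occurs_as_prescribed_index => []. Qed.

Lemma valid_nthE k i : k != ord0 -> i < m * n ->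
  (nth ord0 s i == k) = [exists j : 'I_m, i == index k s + j * (k + 1)].
Proof. by move/valid_occurs/occurs_as_prescribed_index => [_]; apply. Qed.

Lemma valid_nth_index_step k j : k != ord0 -> j < m ->
  nth ord0 s (index k s + j * (k + 1)) = k.
Proof.
move=> k_neq0 lt_j; have k_last := valid_index_last k_neq0.
have le_j : j * (k + 1) <= (m - 1) * (k + 1) by rewrite leq_mul2r; lia.
by apply/eqP; rewrite valid_nthE //; [apply/existsP; exists (Ordinal lt_j) | lia].
Qed.

Lemma valid_nth_le_last k i : i < m * n -> nth ord0 s i = k ->
  i <= index k s + (m - 1) * (k + 1).
Proof.
move=> lt_i s_i; have k_neq0 : k != ord0 by rewrite -s_i valid_nth_neq0.
move/eqP: s_i; rewrite valid_nthE // => /existsP [j /eqP ->].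
by rewrite leq_add2l leq_mul2r; have := ltn_ord j; lia.
Qed.

Lemma valid_mem k : k != ord0 -> k \in val s.
Proof.
move/valid_index_last => k_last; rewrite -index_mem size_tuple.
exact: leq_ltn_trans (leq_addr _ _) k_last.
Qed.

Lemma valid_nth_succ_neq i : i.+1 < m * n -> nth ord0 s i.+1 != nth ord0 s i.
Proof.
move=> lt_i1; apply/negP => /eqP s_i1.
have lt_i : i < m * n by lia.
set k := nth ord0 s i in s_i1; have k_neq0 : k != ord0 by apply: valid_nth_neq0.
have /eqP := s_i1; rewrite valid_nthE // => /existsP [j1 /eqP i1E].
have /eqP := erefl k; rewrite {1}/k valid_nthE // => /existsP [j0 /eqP i0E].
have k_gt0 : 0 < k by rewrite lt0n.
case: (leqP j1 j0) => le_j; have := leq_mul le_j (leqnn (k + 1)); nia.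
Qed.

Lemma valid_le_n : 0 < n -> m <= n.
Proof.
move=> n_gt0; have n_neq0 : (ord_max : 'I_n.+1) != ord0 by rewrite -val_eqE /= -lt0n.
have := valid_index_last n_neq0; rewrite /= mulnDr muln1 mulnBl mul1n; lia.
Qed.

Lemma valid_palindrome_index k : rev s = s -> k != ord0 ->
  (index k s).*2 + (m - 1) * (k + 1) = (m * n).-1.
Proof.
move=> s_pal k_neq0; have k_last := valid_index_last k_neq0.
set th := index k s in k_last *; set X := (m - 1) * (k + 1) in k_last *.
have /andP [m_gt0 _] : (0 < m) && (0 < n) by rewrite -muln_gt0; lia.
have s_mirror i : i < m * n -> nth ord0 s (m * n - i.+1) = nth ord0 s i.
  by move=> lt_i; rewrite -{2}s_pal nth_rev ?size_tuple.
have s_first : nth ord0 s th = k by rewrite nth_index ?valid_mem.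
have s_last : nth ord0 s (th + X) = k by apply: valid_nth_index_step; lia.
have mirror_first_le : m * n - th.+1 <= th + X.
  by apply: valid_nth_le_last; [lia | rewrite s_mirror //; lia].
have le_mirror_last : th <= m * n - (th + X).+1.
  have lt_mirror : m * n - (th + X).+1 < size s by rewrite size_tuple; lia.
  by have := index_nth ord0 lt_mirror; rewrite s_mirror ?s_last // -(size_tuple s).
lia.
Qed.

Lemma valid_rev_neq : 1 < n -> rev s != s.
Proof.
move=> n_gt1; apply/negP => /eqP s_pal.
pose one : 'I_n.+1 := inord 1; pose two : 'I_n.+1 := inord 2.
have one_val : one = 1 :> nat by rewrite inordK; lia.
have two_val : two = 2 :> nat by rewrite inordK; lia.
have one_neq0 : one != ord0 by rewrite -val_eqE /= one_val.
have two_neq0 : two != ord0 by rewrite -val_eqE /= two_val.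
have := valid_palindrome_index s_pal one_neq0; have := valid_palindrome_index s_pal two_neq0.
have := valid_index_last one_neq0; rewrite one_val two_val => one_last e2 e1.
(* d = (m - 1) / 2, and position index one + 2 d = index two + 3 d is claimed by both. *)
set d := index one s - index two s.
have lt_d : d < m by lia.
have one_at := valid_nth_index_step one_neq0 lt_d.
have two_at := valid_nth_index_step two_neq0 lt_d.
have : one = two.
  rewrite -one_at -two_at one_val two_val; congr nth; lia.
by move/(congr1 val); rewrite /= one_val two_val.
Qed.

Lemma rev_valid : valid_seq (rev_tuple s).
Proof.
have nth_rev_s i : i < m * n -> nth ord0 (rev_tuple s) i = nth ord0 s (m * n - i.+1).
  by move=> lt_i; rewrite nth_rev ?size_tuple.
apply/andP; split.
  apply/forallP => i; rewrite (tnth_nth ord0) nth_rev_s //.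
  by apply: valid_nth_neq0; have := ltn_ord i; lia.
apply/forallP => k; apply/implyP => k_neq0; have k_last := valid_index_last k_neq0.
set th := index k s in k_last *; set X := (m - 1) * (k + 1) in k_last *.
have lt_th' : m * n - (th + X).+1 < m * n by lia.
apply/existsP; exists (Ordinal lt_th'); rewrite /= -/X.
apply/andP; split; first lia.
apply/forallP => i; rewrite (tnth_nth ord0) nth_rev_s // valid_nthE //; last lia.
have lt_i := ltn_ord i.
apply/eqP; apply/existsP/existsP => -[j /eqP j_eq]; exists (rev_ord j); apply/eqP.
all: have le_j : j * (k + 1) <= X by rewrite leq_mul2r; have := ltn_ord j; lia.
all: have rev_j : (m - j.+1) * (k + 1) = X - j * (k + 1) by rewrite -mulnBl; congr muln; lia.
all: rewrite /= rev_j -/th in j_eq *; lia.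
Qed.

Lemma valid_first_occurrences_perm : perm_eq (first_occurrences s) (enum (predC1 ord0)).
Proof.
apply: uniq_perm; rewrite ?first_occurrences_uniq ?enum_uniq // => k.
rewrite mem_first_occurrences mem_enum inE; apply/idP/idP => [/(nthP ord0) [i lt_i <-]|].
  by apply: valid_nth_neq0; rewrite size_tuple in lt_i.
exact: valid_mem.
Qed.

Lemma valid_first_occurrences_neq_two_one r : 1 < m -> 1 < n ->
  first_occurrences s != inord 2 :: inord 1 :: r.
Proof.
move=> m_gt1 n_gt1; have size4 : 4 <= m * n by apply: (@leq_mul 2 2).
have s01 : nth ord0 s 1 != nth ord0 s 0 by apply: valid_nth_succ_neq; lia.
have size_s := size_tuple s.
case Es : (tval s) size_s s01 => [|a [|b u]] //= size_s ba; try lia.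
rewrite -[a :: b :: u]/([:: a; b] ++ u) first_occurrences_cat.
rewrite /first_occurrences /= inE (negbTE ba) /=.
apply/negP => /eqP [a2 b1 _].
have one_val : (inord 1 : 'I_n.+1) = 1 :> nat by rewrite inordK; lia.
have two_val : (inord 2 : 'I_n.+1) = 2 :> nat by rewrite inordK; lia.
have two_neq0 : a != ord0 by rewrite a2 -val_eqE /= two_val.
have one_neq0 : b != ord0 by rewrite b1 -val_eqE /= one_val.
have at3 k : k != ord0 -> index k s + (k + 1) = 3 -> nth ord0 s 3 = k.
  by move=> k_neq0 <-; rewrite -[k + 1]mul1n valid_nth_index_step.
have two_at3 : nth ord0 s 3 = a by apply: at3; rewrite // Es /= eqxx a2 two_val.
have one_at3 : nth ord0 s 3 = b.
  by apply: at3; rewrite // Es /= eq_sym (negbTE ba) eqxx b1 one_val.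
by move: ba; rewrite -one_at3 -two_at3 eqxx.
Qed.
End ValidSequence.

Lemma valid_nth_repeat m n (s t : (m * n).-tuple 'I_n.+1) i :
  valid_seq s -> valid_seq t -> i < m * n -> take i s = take i t ->
  nth ord0 s i \in take i s -> nth ord0 t i = nth ord0 s i.
Proof.
move=> s_valid t_valid lt_i st_i; set k := nth ord0 s i => k_prev.
have k_neq0 : k != ord0 by apply: valid_nth_neq0.
have index_prefix (u : seq 'I_n.+1) : k \in take i u -> index k u = index k (take i u).
  by move=> k_in; rewrite -{1}(cat_take_drop i u) index_cat k_in.
have /eqP := erefl k; rewrite {1}/k valid_nthE // => /existsP [j /eqP ->].
rewrite index_prefix // st_i -index_prefix -?st_i //.
exact: valid_nth_index_step.
Qed.

Lemma valid_first_occurrences_inj m n (s t : (m * n).-tuple 'I_n.+1) :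
  valid_seq s -> valid_seq t -> first_occurrences s = first_occurrences t -> s = t.
Proof.
move=> s_valid t_valid st_first; apply: val_inj.
apply: (@eq_from_first_occurrences _ ord0 s t); rewrite ?size_tuple //.
  by move=> i lt_i st_i; apply: valid_nth_repeat.
by move=> i lt_i st_i; apply: valid_nth_repeat => //; apply: esym.
Qed.

Lemma perm_two_one n : 1 < n ->
  exists r, perm_eq (inord 2 :: inord 1 :: r) (enum (predC1 (ord0 : 'I_n.+1))).
Proof.
move=> n_gt1; have one_val : (inord 1 : 'I_n.+1) = 1 :> nat by rewrite inordK; lia.
have two_val : (inord 2 : 'I_n.+1) = 2 :> nat by rewrite inordK; lia.
exists [seq k <- enum (predC1 ord0) | k \notin [:: inord 2; inord 1]].
apply: uniq_perm; rewrite ?enum_uniq //=.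
  rewrite !mem_filter !inE !eqxx /= !orbT /= mem_filter !inE eqxx /= orbF.
  by rewrite filter_uniq ?enum_uniq // andbT -val_eqE /= one_val two_val.
move=> k; rewrite !inE mem_filter mem_enum !inE.
by case: eqP => [->|_]; [|case: eqP => [->|_]]; rewrite //= -val_eqE /= ?one_val ?two_val.
Qed.

Lemma card_valid_lt_fact m n : 1 < m -> 0 < n ->
  #|[pred s : (m * n).-tuple 'I_n.+1 | valid_seq s]| < n`!.
Proof.
move=> m_gt1 n_gt0; set V := [pred s | valid_seq s].
have [n_gt1|n_le1] := ltnP 1 n; last first.
  rewrite eq_card0 ?fact_gt0 // => s; apply/negP => s_valid.
  by have := valid_le_n s_valid n_gt0; lia.
have [r perm_r] := perm_two_one n_gt1; set x0 := inord 2 :: inord 1 :: r in perm_r.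
set P := permutations (enum (predC1 (ord0 : 'I_n.+1))).
have x0_P : x0 \in P by rewrite mem_permutations.
pose firsts (s : (m * n).-tuple 'I_n.+1) := first_occurrences s.
have firsts_uniq : uniq (map firsts (enum V)).
  rewrite map_inj_in_uniq ?enum_uniq // => s t; rewrite !mem_enum.
  exact: valid_first_occurrences_inj.
have firsts_sub : {subset map firsts (enum V) <= rem x0 P}.
  move=> x /mapP [s]; rewrite mem_enum => s_valid ->.
  rewrite (mem_rem_uniq _ (permutations_uniq _)) !inE valid_first_occurrences_neq_two_one //.
  by rewrite mem_permutations valid_first_occurrences_perm.
have := uniq_leq_size firsts_uniq firsts_sub.
rewrite size_map -cardE size_rem // size_permutations ?enum_uniq //.
by rewrite -cardE cardC1 card_ord /= => /leq_ltn_trans; apply; rewrite ltn_predL fact_gt0.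
Qed.

Lemma double_p_le_card_valid m n : 1 < m -> 0 < n ->
  2 * p m n <= #|[pred s : (m * n).-tuple 'I_n.+1 | valid_seq s]|.
Proof.
move=> m_gt1 n_gt0; apply: double_card_imset_le => s; rewrite inE => s_valid.
have rev_class_rev : rev_class (rev_tuple s) = rev_class s.
  by apply/setP => t; rewrite !inE -!val_eqE /= revK orbC.
have s_rev : rev_tuple s != s.
  by rewrite -val_eqE valid_rev_neq // (leq_trans m_gt1) ?(valid_le_n s_valid).
apply: leq_trans (_ : #|[set s; rev_tuple s]| <= _); first by rewrite cards2 eq_sym s_rev.
apply/subset_leq_card/subsetP => t; rewrite !inE => /orP [] /eqP ->.
  by rewrite s_valid eqxx.
by rewrite rev_valid // rev_class_rev eqxx.
Qed.

Theorem proposition3 (m n : nat) (hm : 2 <= m) (hn : 1 <= n) :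
  2 * p m n < n`!.
Proof.
exact: leq_ltn_trans (double_p_le_card_valid hm hn) (card_valid_lt_fact hm hn).
Qed.
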